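(* For a set $\mathcal{R}$ of languages over $\Sigma$ and a regular language $R\subseteq\Sigma^*$ let $\mathcal{R}\,\dot\cap\,R=\{L\cap R\mid L\in\mathcal{R}\}$. (1) Rational sets of regular languages are not closed under point-wise intersection: there exist a rational set of regular languages $\mathcal{R}$ and a regular $R$ such that $\mathcal{R}\,\dot\cap\,R$ is not a rational set of regular languages. (2) If $\mathcal{R}$ is a finite rational set of regular languages and $R$ is regular, then $\mathcal{R}\,\dot\cap\,R$ is a finite rational set of regular languages. (3) In the latter case a different language substitution is in general required: there exist an alphabet $\Delta$, a regular language substitution $\varphi:\Delta\to2^{\Sigma^*}$, a regular $K\subseteq\Delta^+$ with $\mathcal{R}=(K,\varphi)$ finite, and a regular $R\subseteq\Sigma^*$ such that there is no regular $K'\subseteq\Delta^+$ with $\mathcal{R}\,\dot\cap\,R=(K',\varphi)$.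
   Context: Alphabets are nonempty finite sets. A regular language substitution $\varphi:\Delta\to2^{\Sigma^*}$ maps each symbol to a regular language over $\Sigma$, extended by $\varphi(\delta w)=\varphi(\delta)\varphi(w)$. A set $\mathcal{R}$ of regular languages over $\Sigma$ is a rational set of regular languages, written $\mathcal{R}=(K,\varphi)$, if there are an alphabet $\Delta$, a regular $K\subseteq\Delta^+$ and a regular language substitution $\varphi$ with $\mathcal{R}=\{\varphi(w)\mid w\in K\}$. *)

From Stdlib Require List.
From mathcomp Require Import all_boot.
Set Implicit Arguments. Unset Strict Implicit. Unset Printing Implicit Defensive.

Definition alphabet (S : finType) : Prop := 0 < #|S|.

Definition lang (S : finType) := seq S -> Prop.
Definition lang_eq (S : finType) (L1 L2 : lang S) : Prop := forall w, L1 w <-> L2 w.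

Definition regular (S : finType) (L : lang S) : Prop :=
  exists (Q : finType) (q0 : Q) (d : Q -> S -> Q) (F : pred Q),
    forall w, L w <-> F (foldl d q0 w).

Definition eps_lang (S : finType) : lang S := fun w => w = [::].
Definition conc (S : finType) (L1 L2 : lang S) : lang S :=
  fun w => exists u v, w = u ++ v /\ L1 u /\ L2 v.
Definition lang_inter (S : finType) (L1 L2 : lang S) : lang S :=
  fun w => L1 w /\ L2 w.

Definition reg_subst (D S : finType) (phi : D -> lang S) : Prop :=
  forall d, regular (phi d).

Definition subst_word (D S : finType) (phi : D -> lang S) (w : seq D) : lang S :=
  foldr (fun d L => conc (phi d) L) (@eps_lang S) w.

(* Sets of languages, considered up to extensional equality of languages. *)
Definition langset (S : finType) := lang S -> Prop.

Definition pres_set (D S : finType) (K : lang D) (phi : D -> lang S) : langset S :=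
  fun L => exists w, K w /\ lang_eq L (subst_word phi w).

Definition is_presented (D S : finType) (K : lang D) (phi : D -> lang S)
  (R : langset S) : Prop :=
  forall L, R L <-> pres_set K phi L.

Definition reg_plus (D : finType) (K : lang D) : Prop :=
  regular K /\ forall w, K w -> w <> [::].

Definition rational_set (S : finType) (R : langset S) : Prop :=
  exists (D : finType) (K : lang D) (phi : D -> lang S),
    alphabet D /\ reg_plus K /\ reg_subst phi /\ is_presented K phi R.

Definition finite_langset (S : finType) (R : langset S) : Prop :=
  exists s : list (lang S), forall L, R L <-> exists2 L', List.In L' s & lang_eq L L'.

Definition pw_inter (S : finType) (R : langset S) (Rg : lang S) : langset S :=
  fun L => exists L0, R L0 /\ lang_eq L (lang_inter L0 Rg).

From mathcomp Require Import all_boot.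
From mathcomp Require Import zify.
Set Implicit Arguments. Unset Strict Implicit. Unset Printing Implicit Defensive.

(* (1) Over {a, b} the letter substitution presents { Σ^n | n >= 1 }, and
   intersecting with a^*b^* yields the languages L_n of words of a^*b^* of
   length n.  Each L_n is indecomposable: if L_n = A B, one factor is L_n
   itself.  So in any presentation every L_n is the image of a single letter,
   which is impossible for infinitely many n over a finite alphabet.
   (2) A finite set of regular languages is rational, with one letter per
   member, and pointwise intersection keeps the members regular.
   (3) Under the letter substitution every image is nonempty, but
   intersecting with the empty language produces the empty language. *)

Lemma regular_ext (S : finType) (L1 L2 : lang S) :
  lang_eq L1 L2 -> regular L1 -> regular L2.
Proof.
move=> E [Q [q0 [d [F H]]]]; exists Q, q0, d, F => w.
by split => [/E /H|/H /E].
Qed.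

Lemma foldl_const (S Q : Type) (c q : Q) (w : seq S) :
  foldl (fun _ _ => c) q w = if w is [::] then q else c.
Proof. by elim: w q => //= x w IH q; rewrite IH; case: w {IH}. Qed.

Lemma regular_empty (S : finType) : regular (fun _ : seq S => False).
Proof. by exists unit, tt, (fun _ _ => tt), (fun _ => false). Qed.

Lemma regular_eps (S : finType) : regular (@eps_lang S).
Proof.
exists bool, true, (fun _ _ => false), id => w.
by rewrite foldl_const /eps_lang; case: w.
Qed.

Lemma regular_nonempty (S : finType) : regular (fun w : seq S => w <> [::]).
Proof.
exists bool, false, (fun _ _ => true), id => w.
by rewrite foldl_const; case: w.
Qed.

Lemma regular_size (S : finType) (n : nat) : regular (fun w : seq S => size w = n).
Proof.
pose d (q : 'I_n.+2) (_ : S) : 'I_n.+2 := inord (minn q.+1 n.+1).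
have foldl_d q w : val (foldl d q w) = minn (q + size w) n.+1.
  elim: w q => [|x w IH] q /=; have := ltn_ord q; first lia.
  by rewrite IH /d inordK; lia.
exists 'I_n.+2, ord0, d, (fun q => val q == n) => w.
by rewrite foldl_d /=; split => [->|/eqP]; lia.
Qed.

Lemma regular_all (S : finType) (p : pred S) : regular (fun w : seq S => all p w).
Proof.
have foldl_all w b : foldl (fun b x => b && p x) b w = b && all p w.
  by elim: w b => [|x w IH] b /=; rewrite ?andbT // IH andbA.
by exists bool, true, (fun b x => b && p x), id => w; rewrite foldl_all.
Qed.

Lemma foldl_pair (S Q1 Q2 : Type) (d1 : Q1 -> S -> Q1) (d2 : Q2 -> S -> Q2) w p q :
  foldl (fun pq x => (d1 pq.1 x, d2 pq.2 x)) (p, q) w = (foldl d1 p w, foldl d2 q w).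
Proof. by elim: w p q => //= x w IH p q; rewrite IH. Qed.

Lemma regular_inter (S : finType) (A B : lang S) :
  regular A -> regular B -> regular (lang_inter A B).
Proof.
move=> [Q1 [q1 [d1 [F1 H1]]]] [Q2 [q2 [d2 [F2 H2]]]].
exists (Q1 * Q2)%type, (q1, q2), (fun pq x => (d1 pq.1 x, d2 pq.2 x)),
  (fun pq => F1 pq.1 && F2 pq.2) => w.
rewrite foldl_pair /lang_inter /=.
by split => [[/H1 -> /H2 ->] | /andP [/H1 ? /H2 ?]].
Qed.

Lemma conc_cat (S : finType) (A B : lang S) u v : A u -> B v -> conc A B (u ++ v).
Proof. by move=> Au Bv; exists u, v. Qed.

(* Subset construction: besides the run of the automaton for [A], track the
   states reached by the automaton for [B] started at every split point whose
   prefix lies in [A]. *)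
Definition conc_step (S Q1 Q2 : finType) (d1 : Q1 -> S -> Q1) (F1 : pred Q1)
  (q2 : Q2) (d2 : Q2 -> S -> Q2) (pX : Q1 * {set Q2}) (x : S) : Q1 * {set Q2} :=
  (d1 pX.1 x,
   [set d2 q x | q in pX.2] :|: (if F1 (d1 pX.1 x) then [set q2] else set0)).

Definition conc_final (Q1 Q2 : finType) (F2 : pred Q2) (pX : Q1 * {set Q2}) : bool :=
  [exists q in pX.2, F2 q].

Lemma foldl_conc_step (S Q1 Q2 : finType) (d1 : Q1 -> S -> Q1) (F1 : pred Q1)
  (q2 : Q2) (d2 : Q2 -> S -> Q2) (F2 : pred Q2) w pX :
  conc_final F2 (foldl (conc_step d1 F1 q2 d2) pX w) <->
  (exists2 q, q \in pX.2 & F2 (foldl d2 q w)) \/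
  (exists u v, [/\ w = u ++ v, u <> [::], F1 (foldl d1 pX.1 u) & F2 (foldl d2 q2 v)]).
Proof.
elim: w pX => [|x w IH] pX /=.
  split; first by move=> /existsP [q /andP [qX Fq]]; left; exists q.
  case=> [[q qX Fq]|[[|y u] [v [e un _ _]]]] //.
  by apply/existsP; exists q; rewrite qX.
rewrite IH; split.
  case=> [[q]|[u [v [-> un Fu Fv]]]]; last by right; exists (x :: u), v.
  rewrite in_setU => /orP [/imsetP [q' q'X ->] Fq|]; first by left; exists q'.
  case: ifP => [F1x|]; last by rewrite in_set0.
  by rewrite in_set1 => /eqP -> Fq; right; exists [:: x], w.
case=> [[q qX Fq]|[u [v [e un Fu Fv]]]].
  by left; exists (d2 q x) => //; rewrite in_setU imset_f.
case: u e un Fu => [//|y u] /= [<- e] _ Fu.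
case: u e Fu => [|z u] e Fu; last by right; exists (z :: u), v.
by left; exists q2; rewrite ?e // in_setU Fu in_set1 eqxx orbT.
Qed.

Lemma regular_conc (S : finType) (A B : lang S) :
  regular A -> regular B -> regular (conc A B).
Proof.
move=> [Q1 [q1 [d1 [F1 H1]]]] [Q2 [q2 [d2 [F2 H2]]]].
exists (Q1 * {set Q2})%type, (q1, if F1 q1 then [set q2] else set0),
  (conc_step d1 F1 q2 d2), (conc_final F2) => w.
rewrite foldl_conc_step /=; split.
  case=> [[|x u]] [v [-> [/H1 Au /H2 Bv]]]; last by right; exists (x :: u), v.
  by left; exists q2; rewrite //= Au in_set1.
case=> [[q]|[u [v [-> _ Fu Fv]]]]; last by apply: conc_cat; [apply/H1 | apply/H2].
case: ifP => [F1q|]; last by rewrite in_set0.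
rewrite in_set1 => /eqP -> Fw.
by rewrite -[w]cat0s; apply: conc_cat; [apply/H1 | apply/H2].
Qed.

Lemma regular_subst_word (D S : finType) (phi : D -> lang S) (w : seq D) :
  reg_subst phi -> regular (subst_word phi w).
Proof.
by move=> rphi; elim: w => [|d w IH] /=; [exact: regular_eps | exact: regular_conc].
Qed.

Lemma regular_rational_member (S : finType) (R : langset S) (L : lang S) :
  rational_set R -> R L -> regular L.
Proof.
move=> [D [K [phi [_ [_ [rphi HR]]]]]] /HR [w [_ E]].
exact: regular_ext (fun x => iff_sym (E x)) (regular_subst_word w rphi).
Qed.

Definition letter_subst (D S : finType) : D -> lang S := fun _ w => size w = 1.

Lemma subst_word_letter (D S : finType) (w : seq D) (v : seq S) :
  subst_word (@letter_subst D S) w v <-> size v = size w.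
Proof.
elim: w v => [|d w IH] v /=; first by split => [->|/size0nil].
split; first by move=> [x [y [-> [sx /IH sy]]]]; rewrite size_cat sx sy.
by case: v => [|x v] //= [/IH sv]; exists [:: x], v.
Qed.

Lemma regular_letter_subst (D S : finType) : reg_subst (@letter_subst D S).
Proof. by move=> d; exact: regular_size. Qed.

(* The language [a^* b^*] with [a = true] and [b = false]; [None] is the sink
   state of its automaton and [Some false] records that a [b] has been read. *)
Definition ab_step (q : option bool) (x : bool) : option bool :=
  match q, x with
  | Some true, true => Some true
  | Some _, false => Some false
  | _, _ => None
  end.

Definition ab_star : lang bool := fun w => foldl ab_step (Some true) w != None.

Lemma regular_ab_star : regular ab_star.
Proof. by exists (option bool), (Some true), ab_step, (fun q => q != None). Qed.

Lemma foldl_ab_step_nseq (b : bool) n :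
  foldl ab_step (Some b) (nseq n false) = Some (b && (n == 0)).
Proof. by elim: n b => [|n IH] [] //=; rewrite IH. Qed.

Lemma ab_star_a n : ab_star (nseq n true).
Proof. by rewrite /ab_star; elim: n. Qed.

Lemma ab_star_b n : ab_star (nseq n false).
Proof. by rewrite /ab_star foldl_ab_step_nseq. Qed.

Lemma ab_star_ba i k : 0 < i -> 0 < k -> ~ ab_star (nseq i false ++ nseq k true).
Proof.
case: i k => [|i] [|k] // _ _.
by rewrite /ab_star foldl_cat foldl_ab_step_nseq /=; elim: k.
Qed.

Definition ab_len (n : nat) : lang bool := fun w => size w = n /\ ab_star w.

Lemma ab_len_inj n m : lang_eq (ab_len n) (ab_len m) -> n = m.
Proof.
move=> E; have [] := (E (nseq n true)).1 (conj (size_nseq _ _) (ab_star_a n)).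
by rewrite size_nseq.
Qed.

Lemma cat_eq_nseq (T : eqType) (x : T) n (u v : seq T) : u ++ v = nseq n x ->
  u = nseq (size u) x /\ v = nseq (size v) x.
Proof.
move=> e; have : all (pred1 x) (u ++ v) by rewrite e all_nseq /= eqxx orbT.
by rewrite all_cat => /andP [/all_pred1P ? /all_pred1P ?].
Qed.

(* Factor [a^n] as [u v] and [b^n] as [u' v'] in [A B]; the crossed products
   [u v'] and [u' v] lie in [A B] as well, so all words of [A] have length
   [size u], all words of [B] length [size v], and if both are positive then
   [u' v = b^i a^j] contradicts [A B = ab_len n]. *)
Lemma conc_eq_ab_len (A B : lang bool) n : 0 < n ->
  lang_eq (conc A B) (ab_len n) -> lang_eq A (ab_len n) \/ lang_eq B (ab_len n).
Proof.
move=> n_gt0 E.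
have [u [v [ea [Au Bv]]]] : conc A B (nseq n true).
  by apply/E; split; [rewrite size_nseq | exact: ab_star_a].
have [u' [v' [eb [Au' Bv']]]] : conc A B (nseq n false).
  by apply/E; split; [rewrite size_nseq | exact: ab_star_b].
have sizeAB y z : A y -> B z -> size y + size z = n.
  by move=> Ay Bz; have [<- _] := (E _).1 (conc_cat Ay Bz); rewrite size_cat.
have sizeA y : A y -> size y = size u.
  by move=> Ay; have := sizeAB _ _ Ay Bv; have := sizeAB _ _ Au Bv; lia.
have sizeB z : B z -> size z = size v.
  by move=> Bz; have := sizeAB _ _ Au Bz; have := sizeAB _ _ Au Bv; lia.
case: (posnP (size u)) => [/size0nil u0 | u_gt0].
  right => x; split => [Bx | /E [y [z [-> [/sizeA Ay Bz]]]]].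
    by apply/E; rewrite -[x]cat0s -u0; exact: conc_cat.
  by rewrite u0 in Ay; rewrite (size0nil Ay).
case: (posnP (size v)) => [/size0nil v0 | v_gt0].
  left => x; split => [Ax | /E [y [z [-> [Ay /sizeB Bz]]]]].
    by apply/E; rewrite -[x]cats0 -v0; exact: conc_cat.
  by rewrite v0 in Bz; rewrite (size0nil Bz) cats0.
have [_] := (E _).1 (conc_cat Au' Bv).
have [_ ->] := cat_eq_nseq (esym ea); have [-> _] := cat_eq_nseq (esym eb).
by rewrite (sizeA _ Au') => /(ab_star_ba u_gt0 v_gt0).
Qed.

Lemma subst_word_eq_ab_len (D : finType) (psi : D -> lang bool) n w : 0 < n ->
  lang_eq (subst_word psi w) (ab_len n) -> exists d, lang_eq (psi d) (ab_len n).
Proof.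
move=> n_gt0; elim: w => [|d w IH] /= E.
  by have [eps_n _] := (E [::]).1 erefl; rewrite -eps_n in n_gt0.
by case: (conc_eq_ab_len n_gt0 E) => [psi_d|]; [exists d | exact: IH].
Qed.

Definition letter_powers : langset bool :=
  pres_set (fun w : seq unit => w <> [::]) (@letter_subst unit bool).

Lemma rational_letter_powers : rational_set letter_powers.
Proof.
exists unit, (fun w : seq unit => w <> [::]), (@letter_subst unit bool).
split; first by rewrite /alphabet card_unit.
split; first by split; [exact: regular_nonempty | by []].
by split; [exact: regular_letter_subst | by []].
Qed.

Lemma pw_inter_letter_powers n : pw_inter letter_powers ab_star (ab_len n.+1).
Proof.
exists (subst_word (@letter_subst unit bool) (nseq n.+1 tt)).
split; first by exists (nseq n.+1 tt).
by move=> w; rewrite /lang_inter subst_word_letter size_nseq.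
Qed.

Lemma not_rational_pw_inter_letter_powers :
  ~ rational_set (pw_inter letter_powers ab_star).
Proof.
move=> [D [K [psi [_ [_ [_ HR]]]]]].
have letter_of (i : 'I_#|D|.+1) : exists d, lang_eq (psi d) (ab_len i.+1).
  have [w [_ E]] := (HR _).1 (pw_inter_letter_powers i).
  by apply: (subst_word_eq_ab_len (w := w)) => // x; rewrite E.
have [f hf] := fin_all_exists letter_of.
have f_inj : injective f.
  move=> i j fij; apply/val_inj/succn_inj/ab_len_inj => x.
  by rewrite -(hf i x) -(hf j x) fij.
by have := leq_card f f_inj; rewrite card_ord ltnn.
Qed.

Lemma In_nth_seq (T : Type) (x0 : T) (s : seq T) i : i < size s -> List.In (nth x0 s i) s.
Proof. by elim: s i => [|x s IH] [|i] //= lt_i; [left | right; exact: IH]. Qed.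

Lemma nth_seq_In (T : Type) (x0 x : T) (s : seq T) : List.In x s ->
  exists2 i, i < size s & nth x0 s i = x.
Proof.
elim: s => [|y s IH] //= [->|/IH [i lt_i <-]]; first by exists 0.
by exists i.+1.
Qed.

Definition list_langset (S : finType) (s : seq (lang S)) : langset S :=
  fun L => exists2 L', List.In L' s & lang_eq L L'.

Lemma subst_word1 (D S : finType) (psi : D -> lang S) d :
  lang_eq (subst_word psi [:: d]) (psi d).
Proof.
move=> w /=; split; first by move=> [u [v [-> [psi_u ->]]]]; rewrite cats0.
by move=> psi_w; exists w, [::]; rewrite cats0.
Qed.

(* One letter per member; the extra letter [None] keeps the alphabet nonempty
   when [s] is empty. *)
Lemma rational_list_langset (S : finType) (s : seq (lang S)) :
  (forall L, List.In L s -> regular L) -> rational_set (list_langset s).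
Proof.
move=> reg_s.
pose empty : lang S := fun _ => False.
pose psi (o : option 'I_(size s)) : lang S :=
  if o is Some i then nth empty s i else empty.
pose K := lang_inter (fun w => size w = 1)
  (fun w : seq (option 'I_(size s)) => all isSome w).
have K_letter w : K w <-> exists i, w = [:: Some i].
  by case: w => [|[i|] [|? ?]]; split=> //; move=> [] //; exists i.
exists (option 'I_(size s)), K, psi.
split; first by rewrite /alphabet card_option.
split.
  by split; [exact/regular_inter/regular_all/regular_size | move=> w /K_letter [i ->]].
split=> [[i|]|L]; [exact/reg_s/In_nth_seq | exact: regular_empty |].
split=> [[L' /(nth_seq_In empty) [i lt_i <-] EL] | [w [/K_letter [i ->] EL]]].
  exists [:: Some (Ordinal lt_i)]; split; first by apply/K_letter; exists (Ordinal lt_i).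
  by move=> x; rewrite EL subst_word1.
by exists (nth empty s i); [exact: In_nth_seq | move=> x; rewrite EL subst_word1].
Qed.

Lemma rational_set_ext (S : finType) (R1 R2 : langset S) :
  (forall L, R1 L <-> R2 L) -> rational_set R1 -> rational_set R2.
Proof.
move=> E [D [K [phi [aD [rK [rphi HR]]]]]].
by exists D, K, phi; do 3!split=> //; move=> L; rewrite -E.
Qed.

Lemma pw_inter_list_langset (S : finType) (R : langset S) (s : seq (lang S)) Rg :
  (forall L, R L <-> list_langset s L) ->
  forall L, pw_inter R Rg L <-> list_langset (List.map (fun M => lang_inter M Rg) s) L.
Proof.
move=> Hs L; split.
  move=> [L0 [/Hs [L' in_L' EL0] EL]].
  exists (lang_inter L' Rg); first exact: List.in_map.
  by move=> x; rewrite EL /lang_inter EL0.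
move=> [_ /List.in_map_iff [L' [<- in_L']] EL].
by exists L'; split=> //; apply/Hs; exists L'.
Qed.

Lemma pw_inter_finite_rational (S : finType) (R : langset S) (Rg : lang S) :
  rational_set R -> finite_langset R -> regular Rg ->
  rational_set (pw_inter R Rg) /\ finite_langset (pw_inter R Rg).
Proof.
move=> ratR [s Hs] regRg.
have Hs' := pw_inter_list_langset Rg Hs.
split; last by exists (List.map (fun M => lang_inter M Rg) s).
apply: rational_set_ext (fun L => iff_sym (Hs' L)) (rational_list_langset _).
move=> _ /List.in_map_iff [L [<- in_L]]; apply: regular_inter regRg.
by apply: regular_rational_member ratR _; apply/Hs; exists L.
Qed.

Lemma pres_set_letter_subst_inhabited (D S : finType) (x : S) (K : lang D) L :
  pres_set K (@letter_subst D S) L -> exists v, L v.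
Proof.
move=> [w [_ E]]; exists (nseq (size w) x).
by apply/E/subst_word_letter; rewrite size_nseq.
Qed.

Lemma pw_inter_empty_not_presented (K : lang unit) :
  K [:: tt] ->
  ~ (exists K' : lang unit, reg_plus K' /\
       is_presented K' (@letter_subst unit unit)
         (pw_inter (pres_set K (@letter_subst unit unit)) (fun _ => False))).
Proof.
move=> K_tt [K' [_ HR]].
have [|v []] := @pres_set_letter_subst_inhabited _ _ tt K' (fun _ => False).
apply/HR; exists (subst_word (@letter_subst unit unit) [:: tt]).
by split; [exists [:: tt] | move=> v; split=> // [[]]].
Qed.

Lemma finite_pres_set_letter :
  finite_langset (pres_set (fun w : seq unit => size w = 1) (@letter_subst unit unit)).
Proof.
exists [:: subst_word (@letter_subst unit unit) [:: tt]] => L; split.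
  move=> [w [size_w EL]]; exists (subst_word (@letter_subst unit unit) [:: tt]).
    by left.
  by case: w size_w EL => [|[] [|]].
by move=> [_ [<-|[]] EL]; exists [:: tt].
Qed.

Theorem proposition8 :
  (* (1) *)
  (exists (S : finType) (R : langset S) (Rg : lang S),
      alphabet S /\ rational_set R /\ regular Rg /\ ~ rational_set (pw_inter R Rg))
  /\
  (* (2) *)
  (forall (S : finType) (R : langset S) (Rg : lang S),
      alphabet S -> rational_set R -> finite_langset R -> regular Rg ->
      rational_set (pw_inter R Rg) /\ finite_langset (pw_inter R Rg))
  /\
  (* (3) *)
  (exists (S D : finType) (phi : D -> lang S) (K : lang D) (Rg : lang S),
      alphabet S /\ alphabet D /\ reg_subst phi /\ reg_plus K /\
      finite_langset (pres_set K phi) /\ regular Rg /\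
      ~ (exists K' : lang D, reg_plus K' /\
           is_presented K' phi (pw_inter (pres_set K phi) Rg))).
Proof.
have alphabet_unit : alphabet unit by rewrite /alphabet card_unit.
split.
  exists bool, letter_powers, ab_star.
  split; first by rewrite /alphabet card_bool.
  split; first exact: rational_letter_powers.
  by split; [exact: regular_ab_star | exact: not_rational_pw_inter_letter_powers].
split=> [S R Rg _|]; first exact: pw_inter_finite_rational.
exists unit, unit, (@letter_subst unit unit), (fun w => size w = 1), (fun _ => False).
do 2!split=> //.
split; first exact: regular_letter_subst.
split; first by split; [exact: regular_size | by case].
split; first exact: finite_pres_set_letter.
by split; [exact: regular_empty | exact: pw_inter_empty_not_presented].
Qed.
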